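(* Let $A$ and $B$ be output types of system $\mathcal F$. Then $A\wedge B$, $A\vee B$ and $LA$ are output types.
   Context: $\lambda$-terms are those of the untyped $\lambda$-calculus; $Fv(t)$ the free variables; normal means without $\beta$-redex. Types of system $\mathcal F$: built from type variables and type constants (atomic, not quantifiable; $O$ is one) with $\rightarrow$, $\forall$; only proper types (in every $\forall XA$, $X$ occurs free in $A$). Typing: (ax) $\Gamma \vdash x_i : A_i$ for $x_i:A_i\in\Gamma$; ($\rightarrow_i$) from $\Gamma, x:B \vdash t : C$ infer $\Gamma \vdash \lambda x t : B \rightarrow C$; ($\rightarrow_e$) from $\Gamma \vdash u : B\rightarrow C$, $\Gamma \vdash v : B$ infer $\Gamma \vdash (u)v : C$; ($\forall_i$) from $\Gamma \vdash t : A$, $X$ not free in $\Gamma$, infer $\Gamma \vdash t : \forall X A$; ($\forall_e$) from $\Gamma \vdash t : \forall X A$ infer $\Gamma \vdash t : A[C/X]$. An output type is a closed type $S$ not containing $O$ such that for every normal $t$ and variable $\alpha$, $\alpha:O\vdash_{\mathcal F}t:S$ implies $\alpha\notin Fv(t)$. With $X$ a type variable not free in $A,B$: $A\wedge B=\forall X\{(A\rightarrow(B\rightarrow X))\rightarrow X\}$, $A\vee B=\forall X\{(A\rightarrow X)\rightarrow((B\rightarrow X)\rightarrow X)\}$, $LA=\forall X\{X\rightarrow[(A\rightarrow(X\rightarrow X))\rightarrow X]\}$. *)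

From Stdlib Require Import List Arith Bool.
Import ListNotations.

Definition var := nat.

Inductive term : Type :=
| Var : var -> term
| Lam : var -> term -> term
| App : term -> term -> term.

Fixpoint fv (t : term) : list var :=
  match t with
  | Var x => [x]
  | Lam x u => remove Nat.eq_dec x (fv u)
  | App u v => fv u ++ fv v
  end.

Fixpoint normal (t : term) : Prop :=
  match t with
  | Var _ => True
  | Lam _ u => normal u
  | App u v =>
      match u with Lam _ _ => False | _ => normal u end /\ normal v
  end.

(** * Types of system F.
    Type variables are de Bruijn indices ([TVar n]); [All A] binds index 0
    in [A]. Type constants are [TConst k]; the constant O is [TConst 0]. *)
Inductive ty : Type :=
| TVar : nat -> ty
| TConst : nat -> ty
| Arr : ty -> ty -> ty
| All : ty -> ty.

Definition O : ty := TConst 0.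

Fixpoint free_in (n : nat) (A : ty) : bool :=
  match A with
  | TVar m => Nat.eqb m n
  | TConst _ => false
  | Arr A1 A2 => free_in n A1 || free_in n A2
  | All A1 => free_in (S n) A1
  end.

Fixpoint proper (A : ty) : Prop :=
  match A with
  | TVar _ | TConst _ => True
  | Arr A1 A2 => proper A1 /\ proper A2
  | All A1 => free_in 0 A1 = true /\ proper A1
  end.

Fixpoint closed_at (k : nat) (A : ty) : Prop :=
  match A with
  | TVar m => m < k
  | TConst _ => True
  | Arr A1 A2 => closed_at k A1 /\ closed_at k A2
  | All A1 => closed_at (S k) A1
  end.

Definition closed_ty (A : ty) : Prop := closed_at 0 A.

Fixpoint contains_O (A : ty) : bool :=
  match A with
  | TVar _ => false
  | TConst k => Nat.eqb k 0
  | Arr A1 A2 => contains_O A1 || contains_O A2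
  | All A1 => contains_O A1
  end.

Fixpoint tshift (c : nat) (A : ty) : ty :=
  match A with
  | TVar n => if n <? c then TVar n else TVar (S n)
  | TConst k => TConst k
  | Arr A1 A2 => Arr (tshift c A1) (tshift c A2)
  | All A1 => All (tshift (S c) A1)
  end.

(** capture-avoiding substitution of C for variable j (free variables above j
    are shifted down, as the binder of j disappears) *)
Fixpoint tsubst (j : nat) (C : ty) (A : ty) : ty :=
  match A with
  | TVar n => if n =? j then C else if j <? n then TVar (pred n) else TVar n
  | TConst k => TConst k
  | Arr A1 A2 => Arr (tsubst j C A1) (tsubst j C A2)
  | All A1 => All (tsubst (S j) (tshift 0 C) A1)
  end.

(** A[C/X] for [All A] with X = index 0 *)
Definition open_ty (A C : ty) : ty := tsubst 0 C A.

Definition ctx := list (var * ty).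

Fixpoint lookup (G : ctx) (x : var) : option ty :=
  match G with
  | [] => None
  | (y, A) :: G' => if Nat.eqb x y then Some A else lookup G' x
  end.

(** shifting all types of the context: expresses "X not free in Gamma"
    for the freshly bound X in the de Bruijn setting *)
Definition ctx_shift (G : ctx) : ctx := map (fun p => (fst p, tshift 0 (snd p))) G.

Inductive typing : ctx -> term -> ty -> Prop :=
| T_ax : forall G x A, lookup G x = Some A -> typing G (Var x) A
| T_arr_i : forall G x t B C,
    proper B -> typing ((x, B) :: G) t C -> typing G (Lam x t) (Arr B C)
| T_arr_e : forall G u v B C,
    typing G u (Arr B C) -> typing G v B -> typing G (App u v) C
| T_all_i : forall G t A,
    free_in 0 A = true -> typing (ctx_shift G) t A -> typing G t (All A)
| T_all_e : forall G t A C,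
    proper C -> typing G t (All A) -> typing G t (open_ty A C).

Definition output_type (S : ty) : Prop :=
  closed_ty S /\ proper S /\ contains_O S = false /\
  forall (t : term) (alpha : var),
    normal t -> typing [(alpha, O)] t S -> ~ In alpha (fv t).

(** * Connectives. X is the fresh bound variable (index 0); A, B are shifted
    so that X is not free in them. *)
Definition tand (A B : ty) : ty :=
  All (Arr (Arr (tshift 0 A) (Arr (tshift 0 B) (TVar 0))) (TVar 0)).

Definition tor (A B : ty) : ty :=
  All (Arr (Arr (tshift 0 A) (TVar 0))
           (Arr (Arr (tshift 0 B) (TVar 0)) (TVar 0))).

Definition tlist (A : ty) : ty :=
  All (Arr (TVar 0) (Arr (Arr (tshift 0 A) (Arr (TVar 0) (TVar 0))) (TVar 0))).

From Stdlib Require Import List Lia Arith Bool.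
Import ListNotations.

(* Each of the three types is ∀X.T, where T is built from X and the output
   types A, B, and a normal inhabitant t of it in the context α : O also
   inhabits T with X left free.  The λ-prefix of t introduces variables whose
   types end in X, so the body of t, and every argument of type X inside it,
   is a neutral term of a type ending in X; its head cannot be α, which would
   give it type O.  The remaining arguments have type A or B.  Once X is
   instantiated by O, every variable in scope has a type D1 → … → Dk → O, and
   replacing each such variable by λy1…yk.β for a fresh β : O turns such an
   argument into a normal inhabitant of A or B in the context β : O in which β
   is free whenever the argument had a free variable.  Since A and B are output
   types, these arguments are closed, so α is not free in t. *)

Ltac index_cases :=
  repeat (cbn -[Nat.eqb Nat.ltb] in *; match goal with
  | |- context [?a <? ?b] => destruct (Nat.ltb_spec a b)
  | |- context [?a =? ?b] => destruct (Nat.eqb_spec a b) end);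
  try (exfalso; lia); try reflexivity; try (f_equal; lia).

(** * Shifting and substitution of type variables *)

Lemma tshift_tshift A c d : d <= c ->
  tshift (S c) (tshift d A) = tshift d (tshift c A).
Proof.
  revert c d; induction A; intros c d H; cbn -[Nat.eqb Nat.ltb]; try index_cases.
  - rewrite IHA1, IHA2 by lia; reflexivity.
  - rewrite IHA by lia; reflexivity.
Qed.

Lemma tsubst_tshift D j C : tsubst j C (tshift j D) = D.
Proof.
  revert j C; induction D; intros j C; cbn -[Nat.eqb Nat.ltb]; try index_cases.
  - rewrite IHD1, IHD2; reflexivity.
  - rewrite IHD; reflexivity.
Qed.

Lemma tshift_tsubst D c j C : c <= j ->
  tshift c (tsubst j C D) = tsubst (S j) (tshift c C) (tshift c D).
Proof.
  revert c j C; induction D; intros c j C H; cbn -[Nat.eqb Nat.ltb]; try index_cases.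
  - rewrite IHD1, IHD2 by lia; reflexivity.
  - rewrite IHD, tshift_tshift by lia; reflexivity.
Qed.

Lemma tsubst_tsubst A i j C C0 : i <= j ->
  tsubst j C (tsubst i C0 A) =
  tsubst i (tsubst j C C0) (tsubst (S j) (tshift i C) A).
Proof.
  revert i j C C0; induction A; intros i j C C0 H; cbn -[Nat.eqb Nat.ltb].
  - index_cases; rewrite tsubst_tshift; reflexivity.
  - reflexivity.
  - rewrite IHA1, IHA2 by lia; reflexivity.
  - rewrite IHA, tshift_tsubst, tshift_tshift by lia; reflexivity.
Qed.

Lemma free_in_tsubst A k j C : k < j -> free_in k A = true ->
  free_in k (tsubst j C A) = true.
Proof.
  revert k j C; induction A; intros k j C H F; simpl in *.
  - apply Nat.eqb_eq in F; subst. index_cases; apply Nat.eqb_refl.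
  - discriminate.
  - apply orb_true_iff in F as [F|F]; apply orb_true_iff; auto.
  - apply IHA; auto; lia.
Qed.

Lemma free_in_tshift A k c : k < c -> free_in k A = true ->
  free_in k (tshift c A) = true.
Proof.
  revert k c; induction A; intros k c H F; simpl in *.
  - apply Nat.eqb_eq in F; subst. index_cases; apply Nat.eqb_refl.
  - discriminate.
  - apply orb_true_iff in F as [F|F]; apply orb_true_iff; auto.
  - apply IHA; auto; lia.
Qed.

Lemma free_in_tshift_self A c : free_in c (tshift c A) = false.
Proof.
  revert c; induction A; intros c; cbn -[Nat.eqb Nat.ltb].
  - index_cases; apply Nat.eqb_neq; lia.
  - reflexivity.
  - rewrite IHA1, IHA2; reflexivity.
  - apply IHA.
Qed.

Lemma proper_tshift A c : proper A -> proper (tshift c A).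
Proof.
  revert c; induction A; intros c P; simpl in *; auto.
  - destruct (n <? c); exact I.
  - destruct P; split; auto.
  - destruct P; split; auto. apply free_in_tshift; auto; lia.
Qed.

Lemma proper_tsubst A j C : proper C -> proper A -> proper (tsubst j C A).
Proof.
  revert j C; induction A; intros j C PC P; simpl in *; auto.
  - destruct (n =? j); auto. destruct (j <? n); exact I.
  - destruct P; split; auto.
  - destruct P; split.
    + apply free_in_tsubst; auto; lia.
    + apply IHA; auto. apply proper_tshift; auto.
Qed.

Lemma closed_at_mono A k k' : closed_at k A -> k <= k' -> closed_at k' A.
Proof.
  revert k k'; induction A; intros k k' H L; simpl in *; try tauto; try lia.
  - destruct H; split; eauto.
  - eapply IHA; eauto; lia.
Qed.

Lemma tshift_closed A k c : closed_at k A -> k <= c -> tshift c A = A.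
Proof.
  revert k c; induction A; intros k c H L; simpl in *; try index_cases.
  - destruct H; erewrite IHA1, IHA2; eauto.
  - erewrite IHA; eauto; lia.
Qed.

Lemma tsubst_closed A k j C : closed_at k A -> k <= j -> tsubst j C A = A.
Proof.
  revert k j C; induction A; intros k j C H L; simpl in *; try index_cases.
  - destruct H; erewrite IHA1, IHA2; eauto.
  - erewrite IHA; eauto; lia.
Qed.

Lemma tsubst_var_closed A j : closed_at (S j) A -> tsubst j (TVar j) A = A.
Proof.
  revert j; induction A; intros j H; simpl in *; try index_cases.
  - destruct H; rewrite IHA1, IHA2; auto.
  - rewrite IHA; auto.
Qed.

(** * Typing is stable under type substitution *)

Definition ctx_subst (j : nat) (C : ty) (G : ctx) : ctx :=
  map (fun p => (fst p, tsubst j C (snd p))) G.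

Lemma lookup_ctx_shift G x :
  lookup (ctx_shift G) x = option_map (tshift 0) (lookup G x).
Proof.
  induction G as [|[y A] G IH]; simpl; auto.
  destruct (x =? y); simpl; auto.
Qed.

Lemma lookup_ctx_subst G j C x :
  lookup (ctx_subst j C G) x = option_map (tsubst j C) (lookup G x).
Proof.
  induction G as [|[y A] G IH]; simpl; auto.
  destruct (x =? y); simpl; auto.
Qed.

Lemma ctx_subst_shift G C : ctx_subst 0 C (ctx_shift G) = G.
Proof.
  induction G as [|[y A] G IH]; simpl; auto.
  rewrite tsubst_tshift, IH; reflexivity.
Qed.

Lemma ctx_shift_subst G j C :
  ctx_shift (ctx_subst j C G) = ctx_subst (S j) (tshift 0 C) (ctx_shift G).
Proof.
  induction G as [|[y A] G IH]; simpl; auto.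
  rewrite IH, tshift_tsubst by lia; reflexivity.
Qed.

Lemma typing_subst G t T : typing G t T ->
  forall j C, proper C -> typing (ctx_subst j C G) t (tsubst j C T).
Proof.
  induction 1; intros j C0 PC.
  - apply T_ax. rewrite lookup_ctx_subst, H; reflexivity.
  - apply T_arr_i; [apply proper_tsubst | apply IHtyping]; auto.
  - eapply T_arr_e; [apply IHtyping1 | apply IHtyping2]; auto.
  - apply T_all_i; [apply free_in_tsubst; auto; lia|].
    rewrite ctx_shift_subst. apply IHtyping, proper_tshift; auto.
  - unfold open_ty. rewrite tsubst_tsubst by lia.
    apply T_all_e; [apply proper_tsubst | apply IHtyping]; auto.
Qed.

(* A λ-term may acquire its type through ∀-introductions and ∀-eliminations;
   [lam_typing] strips the introductions and is stable under the eliminations. *)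
Fixpoint lam_typing (G : ctx) (x : var) (u : term) (T : ty) : Prop :=
  match T with
  | Arr B C => proper B /\ typing ((x, B) :: G) u C
  | All T' => free_in 0 T' = true /\ lam_typing (ctx_shift G) x u T'
  | _ => False
  end.

Lemma lam_typing_subst T G x u j C : proper C -> lam_typing G x u T ->
  lam_typing (ctx_subst j C G) x u (tsubst j C T).
Proof.
  revert G j C; induction T; intros G j C PC H; simpl in *; try tauto.
  - destruct H as [P Ty]; split.
    + apply proper_tsubst; auto.
    + apply (typing_subst _ _ _ Ty j C PC).
  - destruct H as [F L]; split.
    + apply free_in_tsubst; auto; lia.
    + rewrite ctx_shift_subst. apply IHT; auto. apply proper_tshift; auto.
Qed.

Lemma typing_lam_inv G x u T : typing G (Lam x u) T -> lam_typing G x u T.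
Proof.
  intros Ty; remember (Lam x u) as t eqn:Et; revert x u Et.
  induction Ty; intros y w Et; try discriminate.
  - injection Et as -> ->; simpl; auto.
  - simpl; split; auto.
  - destruct (IHTy y w Et) as [_ L].
    rewrite <- (ctx_subst_shift G C). apply lam_typing_subst; auto.
Qed.

Definition neutral (t : term) : Prop :=
  match t with Lam _ _ => False | _ => True end.

Lemma typing_var_neutral G t n : typing G t (TVar n) -> neutral t.
Proof. destruct t; simpl; auto. intros Ty. exact (typing_lam_inv _ _ _ _ Ty). Qed.

Lemma normal_app u v : normal (App u v) -> neutral u /\ normal u /\ normal v.
Proof. destruct u; simpl; tauto. Qed.

(** * Spines of neutral terms *)

Fixpoint head (t : term) : option var :=
  match t with Var x => Some x | App u _ => head u | Lam _ _ => None end.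

Fixpoint nargs (t : term) : nat :=
  match t with App u _ => S (nargs u) | _ => 0 end.

Fixpoint atomic_target (D : ty) : Prop :=
  match D with Arr _ D2 => atomic_target D2 | All _ => False | _ => True end.

Fixpoint arity (D : ty) : nat :=
  match D with Arr _ D2 => S (arity D2) | _ => 0 end.

Fixpoint drop_args (n : nat) (D : ty) : ty :=
  match n, D with
  | S n', Arr _ D2 => drop_args n' D2
  | _, _ => D
  end.

Lemma drop_args_S n D B C : drop_args n D = Arr B C ->
  drop_args (S n) D = C /\ S n <= arity D.
Proof.
  revert D; induction n; intros D H; simpl in *.
  - subst; simpl; split; auto; lia.
  - destruct D; try discriminate. apply IHn in H. simpl. destruct H; split; auto; lia.
Qed.

Lemma drop_args_tshift n D c : drop_args n (tshift c D) = tshift c (drop_args n D).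
Proof.
  revert D; induction n; intros D; simpl; auto.
  destruct D; simpl; auto. destruct (n0 <? c); auto.
Qed.

Lemma drop_args_const n k : drop_args n (TConst k) = TConst k.
Proof. destruct n; reflexivity. Qed.

Lemma atomic_target_tshift D c : atomic_target D -> atomic_target (tshift c D).
Proof. induction D; simpl; auto. destruct (n <? c); simpl; auto. Qed.

Lemma atomic_target_drop_args n D : atomic_target D -> atomic_target (drop_args n D).
Proof. revert D; induction n; intros D H; simpl; auto. destruct D; simpl in *; auto. Qed.

(* The type of a neutral term with a head of atomic target is read off the
   head's type: no ∀-rule can apply along the spine. *)
Lemma typing_spine G t T h D : typing G t T ->
  head t = Some h -> lookup G h = Some D -> atomic_target D ->
  T = drop_args (nargs t) D /\ nargs t <= arity D.
Proof.
  intros Ty; revert h D; induction Ty; intros h D Hh HL AD; simpl in *.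
  - injection Hh as ->. rewrite HL in H; injection H as ->. split; auto; lia.
  - discriminate.
  - destruct (IHTy1 h D Hh HL AD) as [E L].
    symmetry in E. apply drop_args_S in E as [E L']; auto.
  - exfalso. assert (HL' : lookup (ctx_shift G) h = Some (tshift 0 D))
      by (rewrite lookup_ctx_shift, HL; reflexivity).
    destruct (IHTy h _ Hh HL' (atomic_target_tshift _ _ AD)) as [E _].
    rewrite drop_args_tshift in E. subst. rewrite free_in_tshift_self in H. discriminate.
  - exfalso. destruct (IHTy h D Hh HL AD) as [E _].
    pose proof (atomic_target_drop_args (nargs t) D AD) as A'. rewrite <- E in A'. exact A'.
Qed.

Lemma typing_head_not_all G t A h D : typing G t (All A) ->
  head t = Some h -> lookup G h = Some D -> atomic_target D -> False.
Proof.
  intros Ty Hh HL AD. destruct (typing_spine _ _ _ _ _ Ty Hh HL AD) as [E _].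
  pose proof (atomic_target_drop_args (nargs t) D AD) as A'. rewrite <- E in A'. exact A'.
Qed.

Lemma typing_app_inv G u v T h D : typing G (App u v) T ->
  head u = Some h -> lookup G h = Some D -> atomic_target D ->
  exists B, typing G u (Arr B T) /\ typing G v B.
Proof.
  intros Ty Hh HL AD. inversion Ty; subst; eauto.
  - exfalso. eapply (typing_head_not_all G (App u v)); eauto.
  - exfalso. eapply (typing_head_not_all G (App u v)); eauto.
Qed.

Lemma typing_fv_lookup G t T : typing G t T ->
  forall y, In y (fv t) -> exists D, lookup G y = Some D.
Proof.
  induction 1; intros y Hy; simpl in *.
  - destruct Hy as [<-|[]]; eauto.
  - apply in_remove in Hy as [Hy N]. destruct (IHtyping y Hy) as [D HD].
    simpl in HD. apply Nat.eqb_neq in N. rewrite N in HD. eauto.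
  - apply in_app_or in Hy as [Hy|Hy]; eauto.
  - destruct (IHtyping y Hy) as [D HD]. rewrite lookup_ctx_shift in HD.
    destruct (lookup G y); simpl in HD; try discriminate; eauto.
  - eauto.
Qed.

Lemma head_in_fv t h : head t = Some h -> In h (fv t).
Proof.
  induction t; intros H; simpl in *; try discriminate.
  - injection H as ->; auto.
  - apply in_or_app; auto.
Qed.

Lemma normal_neutral_head t : normal t -> neutral t -> exists h, head t = Some h.
Proof.
  induction t; intros N Hn; simpl in *; eauto; try contradiction.
  destruct (normal_app _ _ N) as (? & ? & _); auto.
Qed.

Lemma typing_neutral_head G t T : typing G t T -> normal t -> neutral t ->
  exists h D, head t = Some h /\ lookup G h = Some D.
Proof.
  intros Ty N Hn. destruct (normal_neutral_head t N Hn) as [h Hh].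
  destruct (typing_fv_lookup _ _ _ Ty h (head_in_fv _ _ Hh)) as [D HD]; eauto.
Qed.

(** * Collapsing variables of type D1 → … → Dk → O *)

Inductive O_arrow : ty -> nat -> Prop :=
| O_arrow_O : O_arrow O 0
| O_arrow_Arr : forall D1 D2 k, proper D1 -> O_arrow D2 k -> O_arrow (Arr D1 D2) (S k).

Lemma O_arrow_arity D k : O_arrow D k -> arity D = k.
Proof. induction 1; simpl; auto. Qed.

Lemma O_arrow_atomic_target D k : O_arrow D k -> atomic_target D.
Proof. induction 1; simpl; auto. Qed.

Lemma O_arrow_drop_args D k : O_arrow D k -> forall n, n <= k -> O_arrow (drop_args n D) (k - n).
Proof.
  induction 1; intros n L.
  - replace n with 0 by lia; constructor.
  - destruct n; simpl; [constructor|apply IHO_arrow; lia]; auto.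
Qed.

Lemma O_arrow_tshift D k c : O_arrow D k -> O_arrow (tshift c D) k.
Proof. induction 1; simpl; constructor; auto. apply proper_tshift; auto. Qed.

(* The binder [S b] differs from [b], which therefore stays free. *)
Fixpoint const_abs (b : var) (k : nat) : term :=
  match k with 0 => Var b | S k' => Lam (S b) (const_abs b k') end.

Lemma const_abs_typing D k G b : O_arrow D k ->
  lookup G b = Some O -> typing G (const_abs b k) D.
Proof.
  intros R; revert G; induction R; intros G HL; simpl; constructor; auto.
  apply IHR. simpl. replace (b =? S b) with false by (symmetry; apply Nat.eqb_neq; lia).
  auto.
Qed.

Lemma const_abs_fv k b : In b (fv (const_abs b k)).
Proof. induction k; simpl; auto. apply in_in_remove; [lia | auto]. Qed.

Lemma const_abs_normal k b : normal (const_abs b k).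
Proof. induction k; simpl; auto. Qed.

Definition unbind (m : var -> option nat) (y : var) : var -> option nat :=
  fun z => if z =? y then None else m z.

(* A free y with [m y = Some k] is replaced by [const_abs b k]; an application
   headed by such a y is replaced by the already reduced result, so that
   normal terms are mapped to normal terms. *)
Fixpoint collapse (b : var) (m : var -> option nat) (t : term) : term :=
  match t with
  | Var y => match m y with Some k => const_abs b k | None => Var y end
  | Lam y u => Lam y (collapse b (unbind m y) u)
  | App u v =>
      match head u with
      | Some h => match m h with
                  | Some k => const_abs b (k - S (nargs u))
                  | None => App (collapse b m u) (collapse b m v)
                  end
      | None => App (collapse b m u) (collapse b m v)
      end
  end.

Fixpoint vars (t : term) : list var :=
  match t with
  | Var x => [x]
  | Lam x u => x :: vars u
  | App u v => vars u ++ vars v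
  end.

Lemma collapse_neutral t b m h : head t = Some h -> m h = None ->
  neutral (collapse b m t).
Proof.
  destruct t; intros Hh Hm; simpl in *; try discriminate.
  - injection Hh as ->. rewrite Hm; exact I.
  - rewrite Hh, Hm; exact I.
Qed.

Lemma collapse_normal t b m : normal t -> normal (collapse b m t).
Proof.
  revert m; induction t; intros m N; simpl in *; auto.
  - destruct (m v); simpl; auto using const_abs_normal.
  - destruct (normal_app _ _ N) as (Hn & N1 & N2).
    destruct (normal_neutral_head t1 N1 Hn) as [h Hh]. rewrite Hh.
    destruct (m h) eqn:Hm; auto using const_abs_normal.
    pose proof (collapse_neutral t1 b m h Hh Hm) as Hc.
    pose proof (IHt1 m N1) as IH1.
    simpl; split; auto. destruct (collapse b m t1); simpl in *; tauto.
Qed.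

Lemma collapse_typing G t T : typing G t T ->
  forall b m G',
  (forall y k, m y = Some k -> exists D, lookup G y = Some D /\ O_arrow D k) ->
  (forall y, m y = None -> In y (fv t) -> lookup G' y = lookup G y) ->
  lookup G' b = Some O -> ~ In b (vars t) ->
  typing G' (collapse b m t) T.
Proof.
  induction 1; intros b m G' HR HA HB NB; simpl.
  - destruct (m x) eqn:Hm.
    + destruct (HR x n Hm) as (D & HD & RD). rewrite H in HD; injection HD as <-.
      apply const_abs_typing; auto.
    + constructor. rewrite HA; simpl; auto.
  - simpl in NB. constructor; auto. apply IHtyping.
    + intros y k Hy. unfold unbind in Hy. simpl.
      destruct (y =? x); [discriminate | auto].
    + intros y Hy Iy. simpl. unfold unbind in Hy.
      destruct (y =? x) eqn:E; auto.
      apply HA, in_in_remove; auto. apply Nat.eqb_neq; auto.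
    + simpl. replace (b =? x) with false by (symmetry; apply Nat.eqb_neq; intros ->; auto). auto.
    + tauto.
  - simpl in NB.
    destruct (head u) as [h|] eqn:Hh; [destruct (m h) as [k|] eqn:Hm|].
    + destruct (HR h k Hm) as (D & HD & RD).
      assert (Ty : typing G (App u v) C) by (econstructor; eauto).
      destruct (typing_spine _ _ _ _ _ Ty Hh HD (O_arrow_atomic_target _ _ RD)) as [E L].
      change (nargs (App u v)) with (S (nargs u)) in E, L. rewrite (O_arrow_arity _ _ RD) in L. subst C.
      apply const_abs_typing; [apply O_arrow_drop_args|]; auto.
    + eapply T_arr_e; [apply IHtyping1 | apply IHtyping2]; auto;
        try (intros y Hy Iy; apply HA; simpl; auto using in_or_app);
        intro; apply NB, in_or_app; auto.
    + eapply T_arr_e; [apply IHtyping1 | apply IHtyping2]; auto;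
        try (intros y Hy Iy; apply HA; simpl; auto using in_or_app);
        intro; apply NB, in_or_app; auto.
  - fold (collapse b m t). constructor; auto. apply IHtyping; auto.
    + intros y k Hy. destruct (HR y k Hy) as (D & HD & RD).
      exists (tshift 0 D). rewrite lookup_ctx_shift, HD; split; auto using O_arrow_tshift.
    + intros y Hy Iy. rewrite !lookup_ctx_shift, HA; auto.
    + rewrite lookup_ctx_shift, HB; reflexivity.
  - fold (collapse b m t). constructor; auto.
Qed.

Lemma collapse_fv t b m y k : m y = Some k -> In y (fv t) ->
  ~ In b (vars t) -> In b (fv (collapse b m t)).
Proof.
  revert m; induction t; intros m Hm Iy NB; simpl in *.
  - destruct Iy as [<-|[]]. rewrite Hm. apply const_abs_fv.
  - apply in_remove in Iy as [Iy N].
    apply in_in_remove; [intro; apply NB; auto|].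
    eapply IHt; eauto. unfold unbind. apply Nat.eqb_neq in N. rewrite N; auto.
  - destruct (head t1) eqn:Hh; [destruct (m v) eqn:Hm'|]; try apply const_abs_fv;
      simpl; apply in_or_app; apply in_app_or in Iy as [Iy|Iy];
      [left; eapply IHt1 | right; eapply IHt2 | left; eapply IHt1 | right; eapply IHt2];
      eauto; intro; apply NB, in_or_app; auto.
Qed.

Definition O_context (G : ctx) : Prop :=
  forall y D, lookup G y = Some D -> O_arrow D (arity D).

Lemma output_closed G a A : output_type A -> O_context G ->
  normal a -> typing G a A -> forall y, ~ In y (fv a).
Proof.
  intros (_ & _ & _ & OA) HG N Ty y Iy.
  set (b := S (list_max (vars a))).
  assert (NB : ~ In b (vars a)).
  { intros I. assert (list_max (vars a) <= list_max (vars a)) as H by lia.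
    apply list_max_le in H. rewrite Forall_forall in H. specialize (H b I). unfold b in H. lia. }
  set (m := fun z => option_map arity (lookup G z)).
  assert (Ty' : typing [(b, O)] (collapse b m a) A).
  { apply (collapse_typing _ _ _ Ty).
    - intros z k Hz. unfold m in Hz.
      destruct (lookup G z) eqn:E; simpl in Hz; try discriminate.
      injection Hz as <-. eauto.
    - intros z Hz Iz. exfalso. destruct (typing_fv_lookup _ _ _ Ty z Iz) as [D HD].
      unfold m in Hz. rewrite HD in Hz. discriminate.
    - simpl. rewrite Nat.eqb_refl; auto.
    - auto. }
  apply (OA _ b (collapse_normal _ _ _ N) Ty').
  destruct (typing_fv_lookup _ _ _ Ty y Iy) as [D HD].
  apply (collapse_fv a b m y (arity D)); auto. unfold m; rewrite HD; reflexivity.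
Qed.

(** * Contexts of types ending in X *)

Inductive X_spine : ty -> Prop :=
| X_spine_X : X_spine (TVar 0)
| X_spine_Arr : forall C D,
    C = TVar 0 \/ output_type C -> X_spine D -> X_spine (Arr C D).

Inductive X_intro : ty -> Prop :=
| X_intro_X : X_intro (TVar 0)
| X_intro_Arr : forall C D, X_spine C -> X_intro D -> X_intro (Arr C D).

Definition X_context (G : ctx) : Prop :=
  forall y D, lookup G y = Some D -> D = O \/ X_spine D.

Lemma X_spine_atomic_target D : X_spine D -> atomic_target D.
Proof. induction 1; simpl; auto. Qed.

Lemma X_spine_drop_args n D : X_spine D -> X_spine (drop_args n D).
Proof.
  intros XD; revert n; induction XD; intros [|n]; simpl; auto; constructor; auto.
Qed.

Lemma X_spine_O_arrow D : X_spine D -> O_arrow (tsubst 0 O D) (arity (tsubst 0 O D)).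
Proof.
  induction 1; simpl; constructor; auto.
  destruct H as [-> | (CC & PC & _)]; simpl; auto.
  rewrite (tsubst_closed C 0 0 O CC); auto.
Qed.

Lemma output_closed_X G a C : X_context G -> output_type C ->
  normal a -> typing G a C -> forall y, ~ In y (fv a).
Proof.
  intros HG OC N Ty.
  pose proof (typing_subst _ _ _ Ty 0 O I) as Ty'.
  rewrite (tsubst_closed C 0 0 O) in Ty' by (apply OC || lia).
  apply (output_closed (ctx_subst 0 O G) a C OC); auto.
  intros y D HD. rewrite lookup_ctx_subst in HD.
  destruct (lookup G y) as [D0|] eqn:E; simpl in HD; try discriminate.
  injection HD as <-. destruct (HG y D0 E) as [-> | XD]; [constructor|].
  apply X_spine_O_arrow; auto.
Qed.

Lemma typing_head_O G t T h : typing G t T ->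
  head t = Some h -> lookup G h = Some O -> T = O.
Proof.
  intros Ty Hh HL. destruct (typing_spine _ _ _ _ _ Ty Hh HL I) as [E _].
  rewrite E; apply drop_args_const.
Qed.

Section X_context.

Variable G : ctx.
Hypothesis G_X : X_context G.

Lemma neutral_X_spine_avoids_O u T : normal u -> neutral u -> typing G u T -> X_spine T ->
  forall y, In y (fv u) -> lookup G y <> Some O.
Proof.
  revert T; induction u as [h | x u _ | u1 IH1 u2 IH2]; intros T N Hn Ty XT y Hy HO;
    [| contradiction |].
  - destruct Hy as [<- | []].
    rewrite (typing_head_O _ _ _ _ Ty eq_refl HO) in XT. inversion XT.
  - destruct (normal_app _ _ N) as (Hn1 & N1 & N2).
    destruct (normal_neutral_head _ N1 Hn1) as [h Hh].
    destruct (typing_fv_lookup _ _ _ Ty h (head_in_fv (App u1 u2) h Hh)) as [D HD].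
    destruct (G_X h D HD) as [-> | XD].
    { rewrite (typing_head_O _ _ _ _ Ty Hh HD) in XT. inversion XT. }
    destruct (typing_app_inv _ _ _ _ _ _ Ty Hh HD (X_spine_atomic_target _ XD))
      as (B & Ty1 & Ty2).
    destruct (typing_spine _ _ _ _ _ Ty1 Hh HD (X_spine_atomic_target _ XD)) as [E _].
    pose proof (X_spine_drop_args (nargs u1) D XD) as XBT. rewrite <- E in XBT.
    inversion XBT as [| ? ? XB _]; subst.
    apply in_app_or in Hy as [Hy | Hy].
    + exact (IH1 _ N1 Hn1 Ty1 XBT y Hy HO).
    + destruct XB as [-> | OB].
      * exact (IH2 _ N2 (typing_var_neutral _ _ _ Ty2) Ty2 X_spine_X y Hy HO).
      * exact (output_closed_X G u2 B G_X OB N2 Ty2 y Hy).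
Qed.

Lemma neutral_X_intro_spine t T : normal t -> neutral t -> typing G t T -> X_intro T ->
  X_spine T.
Proof.
  intros N Hn Ty XT. destruct (typing_neutral_head _ _ _ Ty N Hn) as (h & D & Hh & HD).
  destruct (G_X h D HD) as [-> | XD].
  - rewrite (typing_head_O _ _ _ _ Ty Hh HD) in XT. inversion XT.
  - destruct (typing_spine _ _ _ _ _ Ty Hh HD (X_spine_atomic_target _ XD)) as [-> _].
    apply X_spine_drop_args; auto.
Qed.

End X_context.

Lemma X_intro_avoids_O t G T : X_context G -> normal t -> typing G t T -> X_intro T ->
  forall y, In y (fv t) -> lookup G y <> Some O.
Proof.
  revert G T; induction t as [h | x u IH | u _ v _]; intros G T HG N Ty XT;
    try (apply (neutral_X_spine_avoids_O G HG _ T); simpl; auto;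
         eapply neutral_X_intro_spine; eauto; exact I).
  intros y Hy. apply in_remove in Hy as [Hy Hyx].
  pose proof (typing_lam_inv _ _ _ _ Ty) as L.
  destruct XT as [| C D XC XD]; [contradiction|]. destruct L as [_ Tyu].
  replace (lookup G y) with (lookup ((x, C) :: G) y)
    by (simpl; apply Nat.eqb_neq in Hyx; rewrite Hyx; reflexivity).
  apply (IH _ D); auto.
  intros z D0 HL. simpl in HL. destruct (z =? x); [injection HL as <-; auto | eauto].
Qed.

Lemma output_type_all T : closed_at 1 T -> proper T -> free_in 0 T = true ->
  contains_O T = false -> X_intro T -> output_type (All T).
Proof.
  intros CT PT FT OT XT. repeat split; auto.
  intros t a N Ty.
  assert (TyT : typing [(a, O)] t T).
  { (* ∀-elimination with X itself leaves X free in the body. *)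
    rewrite <- (tsubst_var_closed T 0 CT). exact (T_all_e _ _ _ (TVar 0) I Ty). }
  intros Ha. apply (X_intro_avoids_O t [(a, O)] T) with a; auto.
  - intros y D HL. simpl in HL. destruct (y =? a); [injection HL as <-|]; auto; discriminate.
  - simpl. rewrite Nat.eqb_refl. reflexivity.
Qed.

Lemma output_type_tshift A : output_type A -> tshift 0 A = A.
Proof. intros OA. apply (tshift_closed A 0 0); [apply OA | lia]. Qed.

Lemma output_type_closed_at A k : output_type A -> closed_at k A.
Proof. intros OA. apply (closed_at_mono A 0); [apply OA | lia]. Qed.

Lemma output_type_tand A B : output_type A -> output_type B -> output_type (tand A B).
Proof.
  intros OA OB. unfold tand. rewrite !output_type_tshift by auto.
  pose proof OA as (_ & PA & NA & _). pose proof OB as (_ & PB & NB & _).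
  apply output_type_all; simpl; rewrite ?NA, ?NB, ?orb_true_r;
    repeat split; auto 8 using output_type_closed_at, X_intro, X_spine.
Qed.

Lemma output_type_tor A B : output_type A -> output_type B -> output_type (tor A B).
Proof.
  intros OA OB. unfold tor. rewrite !output_type_tshift by auto.
  pose proof OA as (_ & PA & NA & _). pose proof OB as (_ & PB & NB & _).
  apply output_type_all; simpl; rewrite ?NA, ?NB, ?orb_true_r;
    repeat split; auto 8 using output_type_closed_at, X_intro, X_spine.
Qed.

Lemma output_type_tlist A : output_type A -> output_type (tlist A).
Proof.
  intros OA. unfold tlist. rewrite output_type_tshift by auto.
  pose proof OA as (_ & PA & NA & _).
  apply output_type_all; simpl; rewrite ?NA;
    repeat split; auto 8 using output_type_closed_at, X_intro, X_spine.
Qed.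

Theorem corollary2p1p5 (A B : ty) :
  output_type A -> output_type B ->
  output_type (tand A B) /\ output_type (tor A B) /\ output_type (tlist A).
Proof.
  intros OA OB.
  auto using output_type_tand, output_type_tor, output_type_tlist.
Qed.
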